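(* For every integer $n\ge 3$, let $\delta_1,\dots,\delta_n$ be the eigenvalues of $\mathcal L_S$ (all positive). Then $$\sum_{i=1}^{n}\frac{1}{\delta_{i}}=\frac{\sqrt{3}\,n}{2}\cdot\frac{p^{n}-q^{n}}{p^{n}+q^{n}+2}.$$
   Context: $p=2+\sqrt3$, $q=2-\sqrt3$. $\mathcal L_S$ denotes the $n\times n$ matrix with all diagonal entries equal to $\tfrac43$, entries $(i,i+1)$ and $(i+1,i)$ equal to $-\tfrac13$ for $1\le i\le n-1$, entries $(1,n)$ and $(n,1)$ equal to $+\tfrac13$, and all other entries $0$. *)

From HB Require Import structures.
From mathcomp Require Import all_boot all_order all_algebra.
Set Implicit Arguments. Unset Strict Implicit. Unset Printing Implicit Defensive.
Import Order.TTheory GRing.Theory Num.Theory.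
Local Open Scope ring_scope.

(* The matrix L_S (0-based indices: paper's index k is ordinal k-1).
   Diagonal 4/3; (i,i+1),(i+1,i) -> -1/3; (1,n),(n,1) -> +1/3; else 0.
   For n >= 3 these cases are disjoint. *)
Definition LS (R : fieldType) (n : nat) : 'M[R]_n :=
  \matrix_(i < n, j < n)
    if i == j then 4%:R / 3%:R
    else if (i.+1 == j :> nat) || (j.+1 == i :> nat) then - (1 / 3%:R)
    else if ((i == 0 :> nat) && (j == n.-1 :> nat)) ||
            ((j == 0 :> nat) && (i == n.-1 :> nat)) then 1 / 3%:R
    else 0.

(* Let C be the n x n signed cyclic shift (ones on the superdiagonal, -1 in the
   bottom-left corner).  C is the companion matrix of X^n + 1 and C^T C = 1, and
   L_S = (4 - C - C^T) / 3.  If a b = 1 and a + b = 4 - 3x, then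
     x - L_S = C^T (C - a)(C - b) / 3,
   so det (x - L_S) = (-1/3)^n (a^n + b^n + 2).  Writing a^n + b^n = V_n(a + b)
   with the Lucas polynomials V_n, this shows that the characteristic
   polynomial of L_S is (-1/3)^n (V_n(4 - 3X) + 2): over a real closed field
   both sides agree at every x <= 0, where such a and b exist and are positive.
   The same evaluation shows that the characteristic polynomial has no root
   x <= 0, so every eigenvalue is positive.  Finally the sum of the reciprocal
   roots of a polynomial is -P'(0)/P(0), and V_n' = n U_(n-1) with
   U_(n-1)(a + b) (a - b) = a^n - b^n; taking a, b = 2 +- sqrt 3 gives the
   closed formula. *)

From HB Require Import structures.
From mathcomp Require Import all_boot all_order all_algebra zify ring lra.
Import Order.TTheory GRing.Theory Num.Theory.
Set Implicit Arguments. Unset Strict Implicit. Unset Printing Implicit Defensive.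
Local Open Scope ring_scope.

Lemma nat_ind2 (P : nat -> Prop) :
  P 0%N -> P 1%N -> (forall k, P k -> P k.+1 -> P k.+2) -> forall k, P k.
Proof.
move=> P0 P1 IH k; suff : P k /\ P k.+1 by case.
by elim: k => [|k [Pk Pk1]]; split => //; apply: IH.
Qed.

Section Lucas.
Variable R : comNzRingType.

(* The Lucas polynomials V_k and U_k (Chebyshev polynomials of the first and
   second kind in the variable X/2): both satisfy P_(k+2) = X P_(k+1) - P_k. *)
Fixpoint lucasV (k : nat) : {poly R} :=
  match k with 0 => 2%:R | 1 => 'X | (k1.+1 as k2).+1 => 'X * lucasV k2 - lucasV k1 end.
Fixpoint lucasU (k : nat) : {poly R} :=
  match k with 0 => 1 | 1 => 'X | (k1.+1 as k2).+1 => 'X * lucasU k2 - lucasU k1 end.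

Lemma lucasVSS k : lucasV k.+2 = 'X * lucasV k.+1 - lucasV k.
Proof. by []. Qed.

Lemma lucasUSS k : lucasU k.+2 = 'X * lucasU k.+1 - lucasU k.
Proof. by []. Qed.

Lemma lucasV_eval (a b : R) k : a * b = 1 -> (lucasV k).[a + b] = a ^+ k + b ^+ k.
Proof.
move=> ab1; elim/nat_ind2: k => [||k IH0 IH1].
- by rewrite hornerMn hornerC !expr0.
- by rewrite hornerX !expr1.
rewrite lucasVSS hornerD hornerN hornerM hornerX IH0 IH1.
have -> : (a + b) * (a ^+ k.+1 + b ^+ k.+1) - (a ^+ k + b ^+ k) =
  a ^+ k.+2 + b ^+ k.+2 + (a * b - 1) * (a ^+ k + b ^+ k) by rewrite !exprS; ring.
by rewrite ab1 subrr mul0r addr0.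
Qed.

Lemma lucasU_eval (a b : R) k : a * b = 1 ->
  (lucasU k).[a + b] * (a - b) = a ^+ k.+1 - b ^+ k.+1.
Proof.
move=> ab1; elim/nat_ind2: k => [||k IH0 IH1].
- by rewrite hornerE mul1r !expr1.
- rewrite hornerX; have -> : (a + b) * (a - b) = a ^+ 2 - b ^+ 2 + (a * b - a * b) by ring.
  by rewrite subrr addr0.
rewrite lucasUSS hornerD hornerN hornerM hornerX mulrBl -mulrA IH0 IH1.
have -> : (a + b) * (a ^+ k.+2 - b ^+ k.+2) - (a ^+ k.+1 - b ^+ k.+1) =
  a ^+ k.+3 - b ^+ k.+3 + (a * b - 1) * (a ^+ k.+1 - b ^+ k.+1) by rewrite !exprS; ring.
by rewrite ab1 subrr mul0r addr0.
Qed.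

Lemma lucasV_U k : lucasV k.+2 = 'X * lucasU k.+1 - lucasU k *+ 2.
Proof.
elim/nat_ind2: k => [||k IH0 IH1]; try by rewrite /=; ring.
by rewrite lucasVSS IH0 IH1 (lucasUSS k.+1) (lucasUSS k); ring.
Qed.

(* The analogue of T_k' = k U_(k-1). *)
Lemma deriv_lucasV k : (lucasV k.+1)^`() = lucasU k *+ k.+1.
Proof.
elim/nat_ind2: k => [||k IH0 IH1]; first by rewrite /= derivX.
- by rewrite /= derivB derivM derivX -polyC_natr derivC; ring.
rewrite lucasVSS derivB derivM derivX IH0 IH1 mul1r lucasV_U (lucasUSS k); ring.
Qed.
End Lucas.

Lemma deriv_prod_XsubC_at0 (F : fieldType) (I : Type) (r : seq I) (d : I -> F) :
  (forall i, d i != 0) ->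
  ((\prod_(i <- r) ('X - (d i)%:P))^`()).[0] =
  - (\prod_(i <- r) ('X - (d i)%:P)).[0] * \sum_(i <- r) (d i)^-1.
Proof.
move=> d_neq0; elim: r => [|a r IH]; first by rewrite !big_nil -polyC1 derivC !hornerE.
rewrite !big_cons derivM derivXsubC !hornerE IH.
by move: (d_neq0 a) => da; field.
Qed.

Lemma horner_char_poly (R : comNzRingType) m (A : 'M[R]_m) x :
  (char_poly A).[x] = \det (x%:M - A).
Proof.
rewrite /char_poly -horner_evalE -det_map_mx; congr (\det _).
by apply/matrixP => i j; rewrite !mxE rmorphB rmorphMn /= !horner_evalE hornerX hornerC.
Qed.

Lemma char_poly_castmx (R : nzRingType) m1 m2 (e : m1 = m2) (A : 'M[R]_m1) :
  char_poly (castmx (e, e) A) = char_poly A.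
Proof. by case: m2 / e; rewrite castmx_id. Qed.

(* Entrywise identities between matrices defined by index tests: case on every
   innermost equality of indices, leaving goals for ring arithmetic or lia. *)
Ltac case_nat_eqs :=
  repeat match goal with |- context [?a == ?b :> nat] =>
    lazymatch b with context [if _ then _ else _] => fail | _ => case: (a =P b) => ? end
  end.

Section SignedShift.
Variables (R : comNzRingType) (n : nat).
Hypothesis n_gt0 : (0 < n)%N.

Definition shift : 'M[R]_n := \matrix_(i, j)
  if i == n.-1 :> nat then - (j == 0 :> nat)%:R else (i.+1 == j :> nat)%:R.

(* The only nonzero entry of column j of [shift] lies in row [shift_src j]. *)
Definition shift_src (j : 'I_n) : 'I_n :=
  insubd j (if val j == 0 then n.-1 else (val j).-1).

Lemma val_shift_src j : val (shift_src j) = if val j == 0 then n.-1 else (val j).-1.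
Proof. by rewrite val_insubd; have := ltn_ord j; case: eqP => _ /= ?; rewrite ifT //; lia. Qed.

Lemma shift_col i j :
  shift i j = if i == shift_src j then (if val j == 0 then -1 else 1) else 0.
Proof.
rewrite mxE -val_eqE val_shift_src; case: i j => [i ?] [j ?] /=.
by case_nat_eqs; rewrite ?mulr1n ?mulr0n ?oppr0 //; lia.
Qed.

(* A signed permutation matrix is orthogonal. *)
Lemma shift_orthogonal : shift^T *m shift = 1%:M.
Proof.
apply/matrixP => i j; rewrite !mxE (bigD1 (shift_src i)) //= big1 ?addr0 => [|k ki].
- rewrite mxE !shift_col eqxx -!val_eqE !val_shift_src.
  case: i j => [i ?] [j ?] /=.
  by case_nat_eqs; rewrite ?mulrNN ?mulr1 ?mulr0 ?mulr1n ?mulr0n //; lia.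
- by rewrite mxE shift_col (negPf ki) mul0r.
Qed.

(* The size of the companion matrix of X^n + 1. *)
Lemma size_XnaddC_pred : (size ('X^n + 1 : {poly R})).-1 = n.
Proof. by rewrite -polyC1 size_XnaddC. Qed.

(* The signed shift is the companion matrix of X^n + 1. *)
Lemma char_poly_shift : char_poly shift = 'X^n + 1.
Proof.
have -> : shift = castmx (size_XnaddC_pred, size_XnaddC_pred) (companionmx ('X^n + 1)).
  apply/matrixP => i j; rewrite castmxE !mxE /= coefD coefXn coef1 size_XnaddC_pred.
  case: i j => [i ?] [j ?] /=.
  by case_nat_eqs; rewrite ?add0r ?addr0 //; lia.
rewrite char_poly_castmx companionmxK //.
by rewrite monicE -polyC1 lead_coefXnaddC.
Qed.

Lemma det_shift_sub a : \det (shift - a%:M) = (-1) ^+ n * (a ^+ n + 1).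
Proof.
rewrite -opprB -scaleN1r detZ -horner_char_poly char_poly_shift.
by rewrite hornerD hornerXn hornerC.
Qed.

Lemma det_shift : \det shift = (-1) ^+ n.
Proof. by have := det_shift_sub 0; rewrite raddf0 subr0 expr0n gtn_eqF // add0r mulr1. Qed.
End SignedShift.

Lemma orthogonal_quadratic (R : comNzRingType) m (C : 'M[R]_m) a b :
  C^T *m C = 1%:M ->
  C^T *m ((C - a%:M) *m (C - b%:M)) = C - (a + b)%:M + (a * b) *: C^T.
Proof.
move=> CtC; rewrite mulmxBl !mulmxBr !mul_mx_scalar mul_scalar_mx mulmxA CtC mul1mx.
by rewrite -!scalemxAr CtC mul_mx_scalar; apply/matrixP => i j; rewrite !mxE; ring.
Qed.

Section CirculantLaplacian.
Variables (F : fieldType) (n : nat).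
Hypothesis n_gt2 : (2 < n)%N.
Hypothesis three_neq0 : 3%:R != 0 :> F.

Lemma LS_shift : LS F n = 3%:R^-1 *: (4%:R%:M - shift F n - (shift F n)^T).
Proof.
apply/matrixP => i j; rewrite !mxE -val_eqE /=.
case: i j => [i ?] [j ?] /=.
by case_nat_eqs; rewrite ?mulr1n ?mulr0n; try lia; ring.
Qed.

Lemma horner_char_LS x a b : a * b = 1 -> a + b = 4%:R - 3%:R * x ->
  (char_poly (LS F n)).[x] = (- 3%:R^-1) ^+ n * (a ^+ n + b ^+ n + 2%:R).
Proof.
have n_gt0 : (0 < n)%N by apply: ltnW (ltnW _).
move=> ab1 apb; rewrite horner_char_poly LS_shift; set C := shift F n.
have -> : x%:M - 3%:R^-1 *: (4%:R%:M - C - C^T) =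
          3%:R^-1 *: (C^T *m ((C - a%:M) *m (C - b%:M))).
  rewrite orthogonal_quadratic ?shift_orthogonal // ab1 apb.
  move: C => C; apply/matrixP => i j; rewrite !mxE.
  by case: (i == j); rewrite ?mulr1n ?mulr0n; field.
rewrite detZ !det_mulmx det_tr det_shift // !det_shift_sub // (exprNn 3%:R^-1).
have anbn : a ^+ n * b ^+ n = 1 by rewrite -exprMn ab1 expr1n.
have sign2 : (-1) ^+ n * (-1) ^+ n = 1 :> F by rewrite -expr2 sqrr_sign.
transitivity (3%:R^-1 ^+ n * ((-1) ^+ n * (-1) ^+ n) * ((-1) ^+ n *
   (a ^+ n * b ^+ n + a ^+ n + b ^+ n + 1))); first ring.
by rewrite sign2 anbn; ring.
Qed.

Definition LS_closed : {poly F} :=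
  (- 3%:R^-1) ^+ n *: (lucasV F n \Po (4%:R%:P - 3%:R *: 'X) + 2%:R%:P).

Lemma horner_LS_closed x a b : a * b = 1 -> a + b = 4%:R - 3%:R * x ->
  LS_closed.[x] = (- 3%:R^-1) ^+ n * (a ^+ n + b ^+ n + 2%:R).
Proof.
by move=> ab1 apb; rewrite hornerZ hornerD horner_comp !hornerE -apb lucasV_eval.
Qed.

Lemma deriv_LS_closed_at0 a b : a * b = 1 -> a + b = 4%:R ->
  (LS_closed^`()).[0] * (a - b) =
  (- 3%:R^-1) ^+ n * (- 3%:R * n%:R) * (a ^+ n - b ^+ n).
Proof.
move=> ab1 apb; rewrite /LS_closed; have [m ->] : exists m, n = m.+1.
  by exists n.-1; rewrite prednK //; apply: ltnW (ltnW _).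
rewrite derivZ derivD deriv_comp deriv_lucasV derivC addr0 derivB derivC derivZ derivX.
rewrite hornerZ hornerM horner_comp hornerMn sub0r.
rewrite !(hornerD, hornerN, hornerZ, hornerX, hornerC) mulr0 subr0 mulr1.
by rewrite -apb -lucasU_eval // -mulr_natr; ring.
Qed.
End CirculantLaplacian.

Lemma unit_split (R : rcfType) (c : R) : 2%:R <= c ->
  exists a b : R, [/\ 0 < a, 0 < b, a * b = 1 & a + b = c].
Proof.
move=> c_ge2; set s := Num.sqrt (c ^+ 2 - 4%:R).
have s_sq : s ^+ 2 = c ^+ 2 - 4%:R by rewrite sqr_sqrtr //; nra.
have s_ge0 : 0 <= s by apply: sqrtr_ge0.
have s_ltc : s < c by rewrite -(ltr_pXn2r (n:=2)) ?nnegrE //; [lra | nra].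
exists ((c + s) / 2%:R), ((c - s) / 2%:R); split; try (apply: divr_gt0; lra).
- transitivity ((c ^+ 2 - s ^+ 2) / 4%:R); first by field.
  by rewrite s_sq; field.
- by field.
Qed.

Section RealSpectrum.
Variables (R : rcfType) (n : nat).
Hypothesis n_gt2 : (2 < n)%N.

Let three_neq0 : 3%:R != 0 :> R. Proof. by rewrite pnatr_eq0. Qed.

Lemma horner_LS_nonpos x : x <= 0 -> exists a b : R, [/\ 0 < a, 0 < b,
  (char_poly (LS R n)).[x] = (- 3%:R^-1) ^+ n * (a ^+ n + b ^+ n + 2%:R) &
  (LS_closed R n).[x] = (- 3%:R^-1) ^+ n * (a ^+ n + b ^+ n + 2%:R)].
Proof.
move=> x_le0; have [|a [b [a_gt0 b_gt0 ab1 apb]]] := @unit_split R (4%:R - 3%:R * x).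
  by lra.
by exists a, b; split => //; [exact: horner_char_LS | exact: horner_LS_closed].
Qed.

(* The difference of the two sides vanishes at the points -i, i in nat, which
   are more numerous than its degree. *)
Lemma char_poly_LS : char_poly (LS R n) = LS_closed R n.
Proof.
apply/eqP; rewrite -subr_eq0; apply/eqP; set d := char_poly _ - _.
apply: (@roots_geq_poly_eq0 _ _ [seq - i%:R | i <- iota 0 (size d)]).
- apply/allP => _ /mapP [i _ ->]; rewrite /root hornerD hornerN.
  have [|a [b [_ _ -> ->]]] := horner_LS_nonpos (x := - i%:R); last by rewrite subrr.
  by rewrite oppr_le0 ler0n.
- by rewrite map_inj_uniq ?iota_uniq // => i j /oppr_inj /eqP; rewrite eqr_nat => /eqP.
- by rewrite size_map size_iota.
Qed.

Lemma char_poly_LS_nonpos_neq0 x : x <= 0 -> (char_poly (LS R n)).[x] != 0.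
Proof.
move=> /horner_LS_nonpos [a [b [a_gt0 b_gt0 -> _]]].
rewrite mulf_neq0 ?expf_neq0 ?oppr_eq0 ?invr_eq0 // lt0r_neq0 //.
by have := exprn_gt0 n a_gt0; have := exprn_gt0 n b_gt0; lra.
Qed.

Lemma char_poly_LS_root_gt0 x : root (char_poly (LS R n)) x -> 0 < x.
Proof.
move=> /eqP chi_x; rewrite ltNge; apply/negP.
by move=> /char_poly_LS_nonpos_neq0; rewrite chi_x eqxx.
Qed.

Lemma char_poly_LS_logderiv0 :
  let r := Num.sqrt 3%:R in let p := 2%:R + r in let q := 2%:R - r in
  - ((char_poly (LS R n))^`()).[0] / (char_poly (LS R n)).[0] =
  r * n%:R / 2%:R * ((p ^+ n - q ^+ n) / (p ^+ n + q ^+ n + 2%:R)).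
Proof.
move=> r p q; set kappa : R := (- 3%:R^-1) ^+ n.
have r_sq : r ^+ 2 = 3%:R by rewrite sqr_sqrtr ?ler0n.
have r_gt0 : 0 < r by rewrite sqrtr_gt0 ltr0n.
have pq1 : p * q = 1 by rewrite mulrC -subr_sqr r_sq; ring.
have pq4 : p + q = 4%:R by rewrite /p /q; ring.
have D_gt0 : 0 < p ^+ n + q ^+ n + 2%:R.
  have q_gt0 : 0 < q by rewrite /q; nra.
  have p_gt0 : 0 < p by rewrite /p; lra.
  by have := exprn_gt0 n q_gt0; have := exprn_gt0 n p_gt0; lra.
have kappa_neq0 : kappa != 0 by rewrite expf_neq0 // oppr_eq0 invr_eq0.
have chi0 : (char_poly (LS R n)).[0] = kappa * (p ^+ n + q ^+ n + 2%:R).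
  by apply: horner_char_LS; rewrite // mulr0 subr0.
have two_r_neq0 : 2%:R * r != 0 by rewrite mulf_neq0 ?pnatr_eq0 ?gt_eqF.
have := deriv_LS_closed_at0 n_gt2 pq1 pq4.
rewrite -char_poly_LS chi0 -/kappa -r_sq (_ : p - q = 2%:R * r); last by rewrite /p /q; ring.
move: (_^`().[0]) (p ^+ n + q ^+ n + 2%:R) (p ^+ n - q ^+ n) D_gt0 => d D N D_gt0 dchi0.
by rewrite -(mulfK two_r_neq0 d) dchi0; field; rewrite kappa_neq0 !gt_eqF.
Qed.
End RealSpectrum.

Theorem lemma4p2 (R : rcfType) (n : nat) (hn : (3 <= n)%N) (delta : 'I_n -> R) :
  char_poly (LS R n) = \prod_(i < n) ('X - (delta i)%:P) ->
  (forall i, 0 < delta i) /\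
  \sum_(i < n) (delta i)^-1 =
    let p := 2 + Num.sqrt 3%:R in
    let q := 2 - Num.sqrt 3%:R in
    Num.sqrt 3%:R * n%:R / 2%:R * ((p ^+ n - q ^+ n) / (p ^+ n + q ^+ n + 2%:R)).
Proof.
move=> chiE.
have delta_gt0 i : 0 < delta i.
  apply: (char_poly_LS_root_gt0 hn).
  by rewrite /root chiE horner_prod (bigD1 i) //= hornerXsubC subrr mul0r.
split=> //=; rewrite -(char_poly_LS_logderiv0 R hn) /=.
have chi0_neq0 := char_poly_LS_nonpos_neq0 hn (lexx 0).
have := deriv_prod_XsubC_at0 (index_enum 'I_n) (fun i => lt0r_neq0 (delta_gt0 i)).
by rewrite -chiE => ->; field; exact: chi0_neq0.
Qed.
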